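(* Let $F$ be a commutative field and let $k,h,n$ be integers with $1\le k\le h\le n-1$. If $\mathrm{PG}(n,F)$ contains a linear complex of $h$-subspaces having no singular $(h-1)$-subspace, then $\mathrm{PG}(n+k-h,F)$ contains a linear complex of $k$-subspaces having no singular $(k-1)$-subspace.
   Context: A $d$-subspace is a projective subspace of dimension $d$. A linear complex of $h$-subspaces of $\mathrm{PG}(n,F)$ is the set of $h$-subspaces whose Plücker image ($F(v_0\wedge\cdots\wedge v_h)$ for a basis $v_0,\dots,v_h$ of the corresponding subspace of $F^{n+1}$) lies in a fixed hyperplane of $\mathbb P(\bigwedge^{h+1}F^{n+1})$. An $(h-1)$-subspace $U$ is singular for a linear complex $K$ of $h$-subspaces if every $h$-subspace containing $U$ belongs to $K$. *)

From mathcomp Require Import all_boot all_order all_algebra.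
Set Implicit Arguments. Unset Strict Implicit. Unset Printing Implicit Defensive.
Import GRing.Theory.
Local Open Scope ring_scope.

(* PG(n,F) = projective space of F^(n+1) = row vectors 'rV[F]_(n.+1).
   A d-subspace is the row space of a row-free (d+1) x (n+1) matrix
   (its rows form a basis of the (d+1)-dim vector subspace). *)

Section Plucker.
Variable F : fieldType.

Definition set_idx (N m : nat) (S : {set 'I_N.+1}) (i : 'I_m) : 'I_N.+1 :=
  nth ord0 (enum S) i.

Definition plucker (m N : nat) (B : 'M[F]_(m, N.+1)) (S : {set 'I_N.+1}) : F :=
  \det (colsub (@set_idx N m S) B).

(* A hyperplane of P(/\^(h+1) F^(n+1)) is given (in Plücker coordinates,
   indexed by the (h+1)-subsets of {0..n}) by a coefficient vector c which
   is nonzero on some (h+1)-subset. *)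
Definition hyperplane_coeffs (h n : nat) (c : {ffun {set 'I_n.+1} -> F}) : Prop :=
  exists S : {set 'I_n.+1}, #|S| = h.+1 /\ c S != 0.

Definition in_complex (h n : nat) (c : {ffun {set 'I_n.+1} -> F})
    (B : 'M[F]_(h.+1, n.+1)) : Prop :=
  \sum_(S : {set 'I_n.+1} | #|S| == h.+1) c S * plucker B S = 0.

Definition singular_subspace (h n : nat) (c : {ffun {set 'I_n.+1} -> F})
    (A : 'M[F]_(h, n.+1)) : Prop :=
  forall B : 'M[F]_(h.+1, n.+1), row_free B -> (A <= B)%MS -> in_complex c B.

Definition has_nonsingular_complex (h n : nat) : Prop :=
  exists c : {ffun {set 'I_n.+1} -> F},
    hyperplane_coeffs h c /\
    forall A : 'M[F]_(h, n.+1), row_free A -> ~ singular_subspace c A.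

End Plucker.

From mathcomp Require Import all_boot all_order all_algebra.
From mathcomp Require Import zify.
Set Implicit Arguments. Unset Strict Implicit. Unset Printing Implicit Defensive.
Import GRing.Theory.
Local Open Scope ring_scope.

(* Let W be the coordinate (d-1)-subspace spanned by the last d points of
   PG(p+d, F), with d = h - k.  The h-subspaces through W are the cones
   [block_mx B' 0 0 1] over the k-subspaces [B'] of PG(p, F), and a Plücker
   coordinate of such a cone vanishes unless its column set contains the
   columns of W, where it equals the Plücker coordinate of B' at the
   remaining columns.  Hence restricting a linear complex of h-subspaces to
   the subspaces through W gives a linear complex of k-subspaces of PG(p, F).
   If U' were singular for the restriction, the cone U over U' would be
   singular for the original complex: an h-subspace through U is spanned by
   U and one extra vector, so it lies in the cone over a k-subspace through U'. *)

Lemma enum_setE n (S : {set 'I_n}) : enum S = [seq x <- enum 'I_n | x \in S].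
Proof. by rewrite enumT /enum_mem. Qed.

Lemma enum_ord_add m n :
  enum 'I_(m + n) = map (lshift n) (enum 'I_m) ++ map (@rshift m n) (enum 'I_n).
Proof.
have vE k : map (@nat_of_ord k) (enum 'I_k) = iota 0 k := val_enum_ord k.
apply: (inj_map (@ord_inj (m + n))); rewrite vE map_cat iotaD add0n.
congr (_ ++ _); first by rewrite -vE; elim: (enum 'I_m) => //= ? ? ->.
by rewrite -[m in iota m]addn0 iotaDl -vE; elim: (enum 'I_n) => //= ? ? ->.
Qed.

Lemma mem_set_idx N m (S : {set 'I_N.+1}) (i : 'I_m) :
  (m <= #|S|)%N -> set_idx S i \in S.
Proof.
by move=> leS; rewrite -mem_enum mem_nth // -cardE (leq_trans (ltn_ord i)).
Qed.

Section Complex.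
Variables (F : fieldType) (h n : nat) (c : {ffun {set 'I_n.+1} -> F}).

Lemma in_complex_mulmx (T : 'M[F]_h.+1) (B : 'M[F]_(h.+1, n.+1)) :
  in_complex c B -> in_complex c (T *m B).
Proof.
rewrite /in_complex => cB.
under eq_bigr => S _ do rewrite /plucker -mulmx_colsub det_mulmx mulrCA.
by rewrite -mulr_sumr cB mulr0.
Qed.

Lemma plucker_eq0 m (B : 'M[F]_(m, n.+1)) (S : {set 'I_n.+1}) :
  ~~ row_free B -> plucker B S = 0.
Proof.
move=> depB; apply/eqP; apply: contraNT depB => nzS.
have : colsub (set_idx S) B \in unitmx by rewrite unitmxE unitfE.
rewrite -row_free_unit -[B in colsub _ B]mulmx1 -mulmx_colsub /row_free => /eqP rkm.
by rewrite eqn_leq rank_leq_row -{1}rkm mxrankM_maxl.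
Qed.

Lemma in_complex_row_dep (B : 'M[F]_(h.+1, n.+1)) : ~~ row_free B -> in_complex c B.
Proof. by move=> depB; apply: big1 => S _; rewrite plucker_eq0 ?mulr0. Qed.

Lemma hyperplane_coeffs_nonsingular : (h <= n.+1)%N ->
    (forall A : 'M[F]_(h, n.+1), row_free A -> ~ singular_subspace c A) ->
  hyperplane_coeffs h c.
Proof.
move=> le_hn nosing.
have [/existsP[S /andP[/eqP cardS cS]]|/existsPn c0] :=
  boolP [exists S : {set 'I_n.+1}, (#|S| == h.+1) && (c S != 0)].
  by exists S.
case: (nosing (pid_mx h)); first by rewrite /row_free rank_pid_mx.
move=> B _ _; apply: big1 => S cardS.
by move: (c0 S); rewrite cardS negbK => /eqP ->; rewrite mul0r.
Qed.

End Complex.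

Definition cone_set p d (S : {set 'I_p}) : {set 'I_(p + d)} :=
  lshift d @: S :|: @rshift p d @: [set: 'I_d].

Section ConeSet.
Variables p d : nat.
Implicit Type S : {set 'I_p}.

Lemma lshift_cone_set S i : (lshift d i \in cone_set d S) = (i \in S).
Proof.
rewrite inE mem_imset; last exact: lshift_inj.
by case: imsetP => [[j _ /eqP]|]; rewrite ?eq_lrshift ?orbF.
Qed.

Lemma rshift_cone_set S j : @rshift p d j \in cone_set d S.
Proof. by rewrite inE imset_f ?orbT. Qed.

Lemma enum_cone_set S :
  enum (cone_set d S) = map (lshift d) (enum S) ++ map (@rshift p d) (enum 'I_d).
Proof.
rewrite enum_setE enum_ord_add filter_cat (filter_map (lshift d)).
rewrite (filter_map (@rshift p d)) enum_setE.
congr (_ ++ _); congr (map _ _).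
  by apply: eq_filter => i; rewrite /preim /= lshift_cone_set.
by rewrite -[RHS]filter_predT; apply: eq_filter => j; rewrite /preim /= rshift_cone_set.
Qed.

Lemma card_cone_set S : #|cone_set d S| = (#|S| + d)%N.
Proof.
by rewrite cardE enum_cone_set size_cat !size_map -cardE -enumT size_enum_ord.
Qed.

End ConeSet.

Section ConeComplex.
Variable F : fieldType.

Definition cone_mx m n d (B : 'M[F]_(m, n)) : 'M[F]_(m + d, n + d) :=
  block_mx B 0 0 1%:M.

Variables p d : nat.

Definition cone_coeffs (c : {ffun {set 'I_(p + d).+1} -> F}) :
    {ffun {set 'I_p.+1} -> F} :=
  [ffun S : {set 'I_p.+1} => c (cone_set d S)].

Lemma row_free_cone_mx m (A : 'M[F]_(m, p.+1)) :
  row_free (cone_mx d A) = row_free A.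
Proof. by rewrite /row_free /cone_mx rank_diag_block_mx mxrank1 eqn_add2r. Qed.

Lemma colsub_cone_mx m n r (B : 'M[F]_(r, n)) (f : 'I_(m + d) -> 'I_(n + d))
    (g : 'I_m -> 'I_n) :
  (forall i, f (lshift d i) = lshift d (g i)) ->
  (forall j, f (rshift m j) = rshift n j) ->
  colsub f (cone_mx d B) = cone_mx d (colsub g B).
Proof.
move=> fl fr; apply/matrixP => i j; rewrite mxE.
case: (split_ordP j) => [j1 ->|j2 ->]; rewrite ?fl ?fr;
by case: (split_ordP i) => [i1 ->|i2 ->];
  rewrite /cone_mx ?block_mxEul ?block_mxEur ?block_mxEdl ?block_mxEdr ?mxE.
Qed.

Section SetIndex.
Variables (m : nat) (S : {set 'I_p.+1}).
Hypothesis cardS : #|S| = m.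

Lemma set_idx_cone_lshift (i : 'I_m) :
  @set_idx (p + d) (m + d) (cone_set d S) (lshift d i) = lshift d (set_idx S i).
Proof.
rewrite /set_idx (enum_cone_set d S) nth_cat size_map -cardE cardS /= ltn_ord.
by rewrite (nth_map ord0) // -cardE cardS.
Qed.

Lemma set_idx_cone_rshift (j : 'I_d) :
  @set_idx (p + d) (m + d) (cone_set d S) (rshift m j) = rshift p.+1 j.
Proof.
rewrite /set_idx (enum_cone_set d S) nth_cat size_map -cardE cardS /=.
rewrite ltnNge leq_addr /= addKn (nth_map j) ?size_enum_ord //.
by apply: val_inj; rewrite /= nth_enum_ord.
Qed.

Lemma plucker_cone_mx (B : 'M[F]_(m, p.+1)) :
  @plucker F (m + d) (p + d) (cone_mx d B) (cone_set d S) = plucker B S.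
Proof.
rewrite /plucker (colsub_cone_mx B set_idx_cone_lshift set_idx_cone_rshift).
by rewrite det_ublock det1 mulr1.
Qed.

End SetIndex.

Lemma cone_mx_rshift m n (B : 'M[F]_(m, n)) (j : 'I_d) (x : 'I_(n + d)) :
  cone_mx d B (rshift m j) x = (x == rshift n j)%:R.
Proof.
case: (split_ordP x) => [x1 ->|x2 ->].
  by rewrite /cone_mx block_mxEdl mxE eq_lrshift.
by rewrite /cone_mx block_mxEdr mxE eq_rshift eq_sym.
Qed.

Lemma plucker_cone_mx_eq0 m (S : {set 'I_(p + d).+1}) (B : 'M[F]_(m, p.+1))
    (j : 'I_d) :
  #|S| = (m + d)%N -> @rshift p.+1 d j \notin S ->
  @plucker F (m + d) (p + d) (cone_mx d B) S = 0.
Proof.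
move=> cardS jS; rewrite /plucker (expand_det_row _ (rshift m j)) big1 // => l _.
rewrite mxE (cone_mx_rshift B j (set_idx S l)).
case: eqP => [lj|]; last by rewrite mul0r.
by move: jS; rewrite -lj mem_set_idx ?cardS.
Qed.

Lemma complex_form_cone m (c : {ffun {set 'I_(p + d).+1} -> F})
    (B : 'M[F]_(m, p.+1)) :
  \sum_(S : {set 'I_(p.+1 + d)} | #|S| == (m + d)%N)
     c S * @plucker F (m + d) (p + d) (cone_mx d B) S
  = \sum_(S : {set 'I_p.+1} | #|S| == m) cone_coeffs c S * plucker B S.
Proof.
pose coneb (S : {set 'I_(p.+1 + d)}) := [forall j, rshift p.+1 j \in S].
rewrite (bigID coneb) /= [X in _ + X]big1 ?addr0; last first.
  move=> S /andP[/eqP cardS /forallPn[j jS]].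
  by rewrite (plucker_cone_mx_eq0 _ cardS jS) mulr0.
rewrite (reindex_onto (cone_set d) (fun S => [set i | lshift d i \in S])) /=.
  apply: eq_big => [S|S /andP[/andP[/eqP cardS _] _]].
    have -> : [set i | lshift d i \in cone_set d S] = S.
      by apply/setP => i; rewrite inE lshift_cone_set.
    have -> : coneb (cone_set d S).
      by apply/forallP => j; rewrite rshift_cone_set.
    by rewrite card_cone_set eqn_add2r eqxx !andbT.
  rewrite ffunE plucker_cone_mx //.
  by apply/eqP; rewrite -(eqn_add2r d) -card_cone_set cardS.
move=> S /andP[_ /forallP coneS]; apply/setP => x.
by case: (split_ordP x) => [i ->|j ->];
  rewrite ?lshift_cone_set ?rshift_cone_set ?inE ?coneS.
Qed.

Lemma in_complex_cone k (c : {ffun {set 'I_(p + d).+1} -> F})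
    (B : 'M[F]_(k.+1, p.+1)) :
  @in_complex F (k + d) (p + d) c (cone_mx d B) <-> in_complex (cone_coeffs c) B.
Proof. by rewrite /in_complex -complex_form_cone. Qed.

Lemma submx_col_mxl m1 m2 n (X : 'M[F]_(m1, n)) (Y : 'M[F]_(m2, n)) :
  (X <= col_mx X Y)%MS.
Proof. by rewrite -addsmxE addsmxSl. Qed.

Lemma submx_col_mxr m1 m2 n (X : 'M[F]_(m1, n)) (Y : 'M[F]_(m2, n)) :
  (Y <= col_mx X Y)%MS.
Proof. by rewrite -addsmxE addsmxSr. Qed.

Lemma row_mx_sub_cone_mx r m (X : 'M[F]_(r, p.+1)) (Z : 'M[F]_(r, d))
    (B : 'M[F]_(m, p.+1)) :
  (X <= B)%MS -> (row_mx X Z <= cone_mx d B)%MS.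
Proof.
case/submxP=> D ->; apply/submxP; exists (row_mx D Z).
by rewrite mul_row_block !mulmx0 mulmx1 addr0 add0r.
Qed.

Lemma cone_mxS m r (A : 'M[F]_(m, p.+1)) (B : 'M[F]_(r, p.+1)) :
  (A <= B)%MS -> (cone_mx d A <= cone_mx d B)%MS.
Proof.
by move=> sAB; rewrite col_mx_sub !row_mx_sub_cone_mx ?sub0mx.
Qed.

Lemma cone_mx_sub_extension k (A : 'M[F]_(k, p.+1))
    (B : 'M[F]_((k + d).+1, p.+1 + d)) :
  row_free A -> row_free B -> (cone_mx d A <= B)%MS ->
  exists2 B' : 'M[F]_(k.+1, p.+1), (A <= B')%MS & (B <= cone_mx d B')%MS.
Proof.
move=> freeA freeB sAB; rewrite -row_free_cone_mx in freeA.
have [i notAi] : exists i, ~~ (row i B <= cone_mx d A)%MS.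
  apply/row_subPn; apply: contraL freeB => sBA.
  rewrite /row_free neq_ltn (leq_ltn_trans (mxrankS sBA)) //.
  by rewrite (eqP freeA).
pose v := row i B; exists (col_mx (lsubmx v) A).
  exact (submx_col_mxr (lsubmx v) A).
have sAvB : (cone_mx d A + v <= B)%MS by rewrite addsmx_sub sAB row_sub.
have sAvE : (cone_mx d A + v <= cone_mx d (col_mx (lsubmx v) A))%MS.
  rewrite addsmx_sub cone_mxS ?submx_col_mxr //.
  rewrite -[v in (v <= _)%MS]hsubmxK; apply: row_mx_sub_cone_mx.
  exact (submx_col_mxl (lsubmx v) A).
have ltAv : (cone_mx d A < cone_mx d A + v)%MS.
  by rewrite ltmxE addsmxSl addsmx_sub submx_refl.
apply: submx_trans sAvE; rewrite -(mxrank_leqif_sup sAvB).2 eqn_leq mxrankS //.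
by move: (rank_ltmx ltAv); rewrite (eqP freeA) (eqP freeB).
Qed.

Lemma singular_cone_mx k (c : {ffun {set 'I_(p + d).+1} -> F})
    (A : 'M[F]_(k, p.+1)) :
  row_free A -> singular_subspace (cone_coeffs c) A ->
  @singular_subspace F (k + d) (p + d) c (cone_mx d A).
Proof.
move=> freeA singA B freeB sAB.
have [B' sAB' sBB'] := cone_mx_sub_extension freeA freeB sAB.
rewrite -(mulmxKpV sBB'); apply: in_complex_mulmx; apply/in_complex_cone.
have [freeB'|depB'] := boolP (row_free B'); first exact: singA.
exact: in_complex_row_dep.
Qed.

Lemma has_nonsingular_complex_cone k : (k <= p.+1)%N ->
  has_nonsingular_complex F (k + d) (p + d) -> has_nonsingular_complex F k p.
Proof.
move=> le_kp [c [_ nosing]]; exists (cone_coeffs c).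
suff nosing' (A : 'M[F]_(k, p.+1)) :
    row_free A -> ~ singular_subspace (cone_coeffs c) A.
  by split=> //; apply: hyperplane_coeffs_nonsingular.
move=> freeA /(singular_cone_mx freeA); apply: nosing.
by rewrite row_free_cone_mx.
Qed.

End ConeComplex.

Local Close Scope ring_scope.

Theorem proposition6p1 (F : fieldType) (k h n : nat) :
  (1 <= k)%N -> (k <= h)%N -> (h <= n - 1)%N ->
  has_nonsingular_complex F h n ->
  has_nonsingular_complex F k (n + k - h).
Proof.
(* The construction does not need [1 <= k]. *)
move=> _ le_kh le_hn nonsing.
apply: (@has_nonsingular_complex_cone F (n + k - h) (h - k)); first lia.
have -> : (k + (h - k) = h)%N by lia.
by have -> : (n + k - h + (h - k) = n)%N by lia.
Qed.
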